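(* Let $G$ be a finite group. If $G$ has a subgroup isomorphic to the dihedral group $D_6$ of order $6$ or to the quaternion group $Q_8$ of order $8$, then $G$ is not strongly sequenceable.
   Context: Let $G$ have identity $e$ and let $S\subseteq G\setminus\{e\}$, $|S|=k$. For an ordering $(g_1,\dots,g_k)$ of the elements of $S$ let $h_0=e$, $h_i=g_1\cdots g_i$. The ordering is an $S$-sequencing if $h_0,\dots,h_k$ are pairwise distinct, and a rotational $S$-sequencing if $h_1,\dots,h_k$ are pairwise distinct and $h_k=e$. The group $G$ is strongly sequenceable if for every $S\subseteq G\setminus\{e\}$ there is an $S$-sequencing or a rotational $S$-sequencing (or both). *)

From HB Require Import structures.
From mathcomp Require Import all_boot all_fingroup all_solvable.
Set Implicit Arguments. Unset Strict Implicit. Unset Printing Implicit Defensive.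

Local Open Scope group_scope.

Definition partial_prod (gT : finGroupType) (s : seq gT) (i : nat) : gT :=
  \prod_(x <- take i s) x.

Definition ordering_of (gT : finGroupType) (S : {set gT}) (s : seq gT) : Prop :=
  uniq s /\ S = [set x in s].

Definition is_S_sequencing (gT : finGroupType) (S : {set gT}) (s : seq gT) : Prop :=
  ordering_of S s /\
  uniq [seq partial_prod s i | i <- iota 0 (size s).+1].

Definition is_rotational_S_sequencing (gT : finGroupType) (S : {set gT})
    (s : seq gT) : Prop :=
  ordering_of S s /\
  uniq [seq partial_prod s i | i <- iota 1 (size s)] /\
  partial_prod s (size s) = 1.

Definition strongly_sequenceable (gT : finGroupType) : Prop :=
  forall S : {set gT}, 1 \notin S ->
    exists s : seq gT, is_S_sequencing S s \/ is_rotational_S_sequencing S s.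

(* Sequencings only involve products of elements of S, so they transfer along
   injective homomorphisms: it suffices to find a bad S inside a copy of D_6 or
   Q_8.  Both groups are generated by some x of order n and y outside <x> with
   x^y = x^-1 and y^2 = x^e, so y^j x^i <-> (j, i) identifies them with an
   explicit multiplication on bool * 'I_n.  For S = D_6 \ {1} and
   S = Q_8 \ {1, x^2}, an exhaustive computation over all orderings of S shows
   that none is a sequencing or a rotational sequencing. *)

From HB Require Import structures.
From mathcomp Require Import all_boot all_fingroup all_solvable zmodp.

Set Implicit Arguments. Unset Strict Implicit. Unset Printing Implicit Defensive.

Local Open Scope group_scope.

Section PrefixProducts.

Variables (T : eqType) (mul : T -> T -> T) (one : T).

Definition prefix_prod (s : seq T) i := foldr mul one (take i s).

Definition sequencingb (s : seq T) :=
  uniq [seq prefix_prod s i | i <- iota 0 (size s).+1].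

Definition rotational_sequencingb (s : seq T) :=
  uniq [seq prefix_prod s i | i <- iota 1 (size s)] &&
  (prefix_prod s (size s) == one).

Definition unsequenceable (S0 : seq T) :=
  all (fun s => ~~ sequencingb s && ~~ rotational_sequencingb s) (permutations S0).

End PrefixProducts.

Lemma partial_prodE (gT : finGroupType) (s : seq gT) i :
  partial_prod s i = prefix_prod *%g 1 s i.
Proof. by rewrite /prefix_prod foldrE. Qed.

Lemma perm_eq_map_preim (T1 T2 : eqType) (f : T1 -> T2) (s : seq T2) (t : seq T1) :
  perm_eq s (map f t) -> exists2 t', perm_eq t' t & s = map f t'.
Proof.
case: t => [|x0 t]; first by move/perm_nilP->; exists [::].
case/(perm_iotaP (f x0)) => Is; rewrite size_map => pIs ->.
exists [seq nth x0 (x0 :: t) i | i <- Is].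
  by have := perm_map (nth x0 (x0 :: t)) pIs; rewrite map_nth_iota0 ?take_size.
rewrite -map_comp; apply/eq_in_map => i; rewrite (perm_mem pIs) mem_iota.
by case/andP=> _ lt_i; rewrite (nth_map x0).
Qed.

Section Transfer.

Variables (T : eqType) (mul : T -> T -> T) (one : T) (gT : finGroupType).
Variable f : T -> gT.
Hypotheses (f_inj : injective f) (fM : {morph f : a b / mul a b >-> a * b}).
Hypothesis f1 : f one = 1.

Lemma prefix_prod_map s i :
  prefix_prod *%g 1 (map f s) i = f (prefix_prod mul one s i).
Proof. by rewrite /prefix_prod -map_take; elim: (take i s) => //= a t ->; rewrite fM. Qed.

Lemma uniq_prefix_prod_map s r :
  uniq [seq prefix_prod *%g 1 (map f s) i | i <- r] =
  uniq [seq prefix_prod mul one s i | i <- r].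
Proof. by rewrite (eq_map (prefix_prod_map s)) map_comp (map_inj_uniq f_inj). Qed.

Lemma sequencingb_map s : sequencingb *%g 1 (map f s) = sequencingb mul one s.
Proof. by rewrite /sequencingb size_map uniq_prefix_prod_map. Qed.

Lemma rotational_sequencingb_map s :
  rotational_sequencingb *%g 1 (map f s) = rotational_sequencingb mul one s.
Proof.
rewrite /rotational_sequencingb size_map uniq_prefix_prod_map prefix_prod_map.
by rewrite -f1 (inj_eq f_inj).
Qed.

Lemma unsequenceable_not_strongly_sequenceable (S0 : seq T) :
  uniq S0 -> one \notin S0 -> unsequenceable mul one S0 -> ~ strongly_sequenceable gT.
Proof.
move=> uniq_S0 one_notin_S0 /allP S0_unseq ss.
have [|s seq_s] := ss [set a in map f S0]; first by rewrite inE -f1 mem_map.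
have [uniq_s defS] : ordering_of [set a in map f S0] s by case: seq_s => [[]|[]].
have /perm_eq_map_preim[t perm_t def_s] : perm_eq s (map f S0).
  apply: uniq_perm => [//||a]; first by rewrite map_inj_uniq.
  by have /setP/(_ a) := defS; rewrite !inE.
have /S0_unseq/andP[] : t \in permutations S0 by rewrite mem_permutations.
rewrite -sequencingb_map -rotational_sequencingb_map -def_s.
rewrite /sequencingb /rotational_sequencingb -!(eq_map (partial_prodE s)).
rewrite -partial_prodE.
by case: seq_s => [[_ ->] | [_ [-> /eqP ->]]].
Qed.

End Transfer.

(* (j, i) stands for y^j x^i, multiplied using x^i y = y x^(i c) and y^2 = x^e. *)
Definition meta_mul (c e : nat) {n : nat} (u v : bool * 'I_n.+1) : bool * 'I_n.+1 :=
  let: (j, i) := u in let: (l, k) := v in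
  (j (+) l, inZp ((if j && l then e else 0) + (if l then i * c else i) + k)%N).

Section Metacyclic.

Variables (gT : finGroupType) (x y : gT) (n c e : nat).
Hypotheses (ox : #[x] = n.+1) (notXy : y \notin <[x]>).
Hypotheses (xy : x ^ y = x ^+ c) (y2 : y ^+ 2 = x ^+ e).

Definition meta_elt (u : bool * 'I_n.+1) := y ^+ u.1 * x ^+ u.2.

Lemma meta_elt1 : meta_elt (false, ord0) = 1.
Proof. by rewrite /meta_elt mulg1. Qed.

Lemma meta_eltM : {morph meta_elt : u v / meta_mul c e u v >-> u * v}.
Proof.
have commXY (i : nat) (l : bool) :
    x ^+ i * y ^+ l = y ^+ l * x ^+ (if l then i * c else i)%N.
  by case: l => /=; rewrite ?expg0 ?mulg1 ?mul1g // expg1 conjgC conjXg xy -expgM mulnC.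
have mulYY (j l : bool) :
    y ^+ j * y ^+ l = y ^+ (j (+) l) * x ^+ (if j && l then e else 0).
  by case: j; case: l => /=; rewrite ?expg0 ?mulg1 ?mul1g // -expgD y2.
case=> j i [l k]; rewrite /meta_elt /= expg_mod -?ox ?expg_order // !expgD.
by rewrite !mulgA -(mulgA (y ^+ j)) commXY mulgA mulYY.
Qed.

Lemma meta_elt_inj : injective meta_elt.
Proof.
case=> j i [l k]; rewrite /meta_elt /= => eq_jl.
have def_j : j = l.
  have : (y ^+ l)^-1 * y ^+ j \in <[x]>.
    rewrite -(mulgK (x ^+ i) (y ^+ j)) eq_jl !mulgA mulVg mul1g.
    by rewrite groupM ?groupV ?mem_cycle.
  case: j l {eq_jl} => -[] //=;
    by rewrite ?expg0 ?expg1 ?invg1 ?mul1g ?mulg1 ?groupV (negbTE notXy).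
move: eq_jl; rewrite def_j => /mulgI/eqP; rewrite eq_expg_mod_order ox !modn_small //.
by move/eqP/val_inj->.
Qed.

Lemma metacyclic_not_strongly_sequenceable (S0 : seq (bool * 'I_n.+1)) :
  uniq S0 -> (false, ord0) \notin S0 ->
  unsequenceable (meta_mul c e) (false, ord0) S0 -> ~ strongly_sequenceable gT.
Proof.
exact: (unsequenceable_not_strongly_sequenceable meta_elt_inj meta_eltM meta_elt1
  (S0 := S0)).
Qed.

End Metacyclic.

Lemma dihedral6_generators (gT : finGroupType) (H : {group gT}) :
  H \isog 'D_6 ->
  exists x y : gT, [/\ #[x] = 3, y \notin <[x]>, x ^ y = x^-1 & y ^+ 2 = 1].
Proof.
case/(isoGrpP _ (Grp_dihedral (isT : 1 < 3))); rewrite card_dihedral // => oH.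
case/existsP=> -[x y] /= /eqP[defH x3 y2 xy].
have {}defH : <[x]> * <[y]> = H.
  by rewrite -norm_joinEr // norms_cycle xy groupV cycle_id.
have notXy : y \notin <[x]>.
  apply: contraL (isT : 3 < 3.*2) => Xy.
  rewrite -leqNgt -oH -defH mulGSid ?cycle_subG //.
  by rewrite dvdn_leq // order_dvdn x3.
have oy : #[y] = 2 by apply: nt_prime_order (group1_contra notXy).
have TIxy : <[x]> :&: <[y]> = 1.
  by rewrite setIC prime_TIg ?cycle_subG // -orderE oy.
exists x, y; split=> //.
have := TI_cardMg TIxy; rewrite defH oH -!orderE oy.
by move/(congr1 (divn^~ 2)); rewrite mulnK.
Qed.

Lemma dihedral6_not_strongly_sequenceable (gT : finGroupType) (H : {group gT}) :
  H \isog 'D_6 -> ~ strongly_sequenceable gT.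
Proof.
case/dihedral6_generators=> x [y [ox notXy xy y2]].
have xy2 : x ^ y = x ^+ 2 by rewrite xy invg_expg ox.
have y2x : y ^+ 2 = x ^+ 0 by rewrite y2 expg0.
by apply: (metacyclic_not_strongly_sequenceable ox notXy xy2 y2x
  (S0 := [:: (false, inZp 1); (false, inZp 2);
             (true, inZp 0); (true, inZp 1); (true, inZp 2)])).
Qed.

Lemma quaternion8_not_strongly_sequenceable (gT : finGroupType) (H : {group gT}) :
  H \isog 'Q_8 -> ~ strongly_sequenceable gT.
Proof.
case/(generators_quaternion (isT : 2 < 3)) => -[x y].
case=> _ _ ox /setDP[_ notXy] [_ y2 xy].
have xy3 : x ^ y = x ^+ 3 by rewrite xy invg_expg ox.
by apply: (metacyclic_not_strongly_sequenceable ox notXy xy3 y2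
  (S0 := [:: (false, inZp 1); (false, inZp 3);
             (true, inZp 0); (true, inZp 1); (true, inZp 2); (true, inZp 3)])).
Qed.

Theorem theorem6p1 (gT : finGroupType) :
  (exists H : {group gT}, (H \isog 'D_6)%g \/ (H \isog 'Q_8)%g) ->
  ~ strongly_sequenceable gT.
Proof.
case=> H [isoD | isoQ].
- exact: dihedral6_not_strongly_sequenceable isoD.
- exact: quaternion8_not_strongly_sequenceable isoQ.
Qed.
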